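(* Let $G=(V,E)$ be a simple graph on vertices $V=\{1,\dots,n\}$, let $d_j$ denote the degree of vertex $j$, and let $\lambda$ be a real number. On $n$ qubits define $$\hat C=-\sum_{i=1}^n\big(\sigma^{(z)}_i+I\big)+\lambda\sum_{\{i,j\}\in E}\big(\sigma^{(z)}_i+I\big)\big(\sigma^{(z)}_j+I\big),\qquad \hat B=-\sum_{i=1}^n\sigma^{(x)}_i,$$ and $\ket{\varphi_0}=2^{-n/2}\sum_{z\in\{-1,1\}^n}\ket{z}$ (the uniform superposition over computational basis states). For real $\beta,\gamma$ let $\ket{\psi(\beta,\gamma)}=e^{-i\beta\hat B}e^{-i\gamma\hat C}\ket{\varphi_0}$. Then for every vertex $j$, $$J_j(\beta,\gamma):=\bra{\psi(\beta,\gamma)}\sigma^{(z)}_j\ket{\psi(\beta,\gamma)}=\sin(2\beta)\,\big(\cos(2\gamma\lambda)\big)^{d_j}\,\sin\!\big(2\gamma(1-d_j\lambda)\big).$$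
   Context: $\sigma^{(x)}_i,\sigma^{(z)}_i$ denote the Pauli $X$ and $Z$ matrices acting on qubit $i$ (identity elsewhere), and $I$ is the identity. Computational basis states $\ket{z}$, $z\in\{-1,1\}^n$, are labeled by the eigenvalues of the $\sigma^{(z)}_i$. $\hat C$ is the Hamiltonian encoding of the Maximum Independent Set penalized cost under $x_i\mapsto\frac12(I+\sigma^{(z)}_i)$; $\ket{\psi(\beta,\gamma)}$ is the depth-one QAOA state. *)

From mathcomp Require Import all_boot all_order all_algebra.
From mathcomp Require Import boolp classical_sets reals topology normedtype sequences trigo.
From mathcomp.real_closed Require Import complex.
Import GRing.Theory Num.Theory numFieldNormedType.Exports.
Local Open Scope ring_scope.
Local Open Scope complex_scope.

Section QAOA.
Variable R : realType.
Local Notation C := R[i].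

(* Computational basis states |z>, z in {-1,1}^n, encoded as bit-vectors:
   bit true  <-> eigenvalue +1 of sigma^z,  bit false <-> eigenvalue -1. *)
Definition basis (n : nat) := {ffun 'I_n -> bool}.
Definition spin (b : bool) : R := if b then 1 else -1.

Definition state n := basis n -> C.
Definition op n := basis n -> basis n -> C.

Definition op_mul n (A B : op n) : op n :=
  fun z w => \sum_(y : basis n) A z y * B y w.
Arguments op_mul {n}.
Definition op_id n : op n := fun z w => if z == w then 1 else 0.
Definition op_add n (A B : op n) : op n := fun z w => A z w + B z w.
Arguments op_add {n}.
Definition op_scale n (c : C) (A : op n) : op n := fun z w => c * A z w.
Arguments op_scale {n}.
Definition op_pow n (A : op n) (k : nat) : op n := iter k (op_mul A) (op_id n).
Arguments op_pow {n}.
Definition op_sum n (I : finType) (P : pred I) (F : I -> op n) : op n :=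
  fun z w => \sum_(i | P i) F i z w.
Arguments op_sum {n I}.
Definition apply n (A : op n) (v : state n) : state n :=
  fun z => \sum_(w : basis n) A z w * v w.
Arguments apply {n}.
Definition expect n (v : state n) (A : op n) : C :=
  \sum_(z : basis n) \sum_(w : basis n) (v z)^* * A z w * v w.
Arguments expect {n}.

Definition expop n (A : op n) : op n := fun z w =>
  let s := fun N : nat => \sum_(k < N) op_pow A k z w / (k`!)%:R in
  (limn (fun N => complex.Re (s N) : R^o)) +i* (limn (fun N => complex.Im (s N) : R^o)).
Arguments expop {n}.

Definition flip n (i : 'I_n) (z : basis n) : basis n :=
  [ffun k => if k == i then ~~ z k else z k].
Arguments flip {n}.
Definition sigma_x n (i : 'I_n) : op n :=
  fun z w => if z == flip i w then 1 else 0.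
Arguments sigma_x {n}.
Definition sigma_z n (i : 'I_n) : op n :=
  fun z w => if z == w then (spin (z i))%:C else 0.
Arguments sigma_z {n}.

Definition simple_graph n (adj : rel 'I_n) : Prop :=
  (forall i j, adj i j = adj j i) /\ (forall i, ~~ adj i i).
Arguments simple_graph {n}.
Definition degree n (adj : rel 'I_n) (j : 'I_n) : nat := #|[set k | adj j k]|.
Arguments degree {n}.

(* C_hat = - sum_i (Z_i + I) + lambda sum_{{i,j} in E} (Z_i + I)(Z_j + I);
   each unordered edge {i,j} is counted once, as the pair (i,j) with i < j. *)
Definition C_hat n (adj : rel 'I_n) (lambda : R) : op n :=
  op_add
    (op_scale (-1) (op_sum predT (fun i : 'I_n => op_add (sigma_z i) (op_id n))))
    (op_scale lambda%:C
       (op_sum (fun p : 'I_n * 'I_n => (p.1 < p.2)%N && adj p.1 p.2)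
          (fun p => op_mul (op_add (sigma_z p.1) (op_id n))
                           (op_add (sigma_z p.2) (op_id n))))).
Arguments C_hat {n}.

Definition B_hat n : op n :=
  op_scale (-1) (op_sum predT (fun i : 'I_n => sigma_x i)).

Definition phi0 n : state n := fun _ => ((Num.sqrt (2%:R ^+ n : R))^-1)%:C.

Definition psi n (adj : rel 'I_n) (lambda beta gamma : R) : state n :=
  apply (expop (op_scale (- ('i * beta%:C)) (B_hat n)))
    (apply (expop (op_scale (- ('i * gamma%:C)) (C_hat adj lambda))) (phi0 n)).

Arguments psi {n}.

End QAOA.

Arguments op_mul {R n}. Arguments op_id {R}. Arguments op_add {R n}.
Arguments op_scale {R n}. Arguments op_pow {R n}. Arguments op_sum {R n I}.
Arguments apply {R n}. Arguments expect {R n}. Arguments expop {R n}.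
Arguments flip {n}. Arguments sigma_x {R n}. Arguments sigma_z {R n}.
Arguments simple_graph {n}. Arguments degree {n}. Arguments C_hat {R n}.
Arguments B_hat {R}. Arguments phi0 {R}. Arguments psi {R n}.

From Pilot Require Import Defs.
From mathcomp Require Import all_boot all_order all_algebra.
From mathcomp Require Import boolp classical_sets reals topology normedtype sequences trigo.
From mathcomp.real_closed Require Import complex.
From mathcomp Require Import ring lra.
Import GRing.Theory Num.Theory numFieldNormedType.Exports.
Local Open Scope ring_scope.
Local Open Scope complex_scope.
Local Open Scope classical_set_scope.

(* The phase separator exp(-i gamma C) is diagonal in the computational basis,
   with phases exp(-i gamma c(z)), and conjugation by a tensor power of the
   Hadamard matrix diagonalizes B, so the mixer exp(-i beta B) is the tensor
   power of the rotation [[cos beta, i sin beta], [i sin beta, cos beta]].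
   Conjugating sigma^z_j by the mixer gives sigma^z_j (cos 2beta + i sin 2beta
   sigma^x_j).  The cos 2beta part has expectation 0, because all amplitudes
   of exp(-i gamma C)|phi0> have the same modulus; the sin 2beta part pairs z
   with z flipped at j and contributes the phase difference
   exp(-2i gamma z_j (1 - lambda sum_{k ~ j} (z_k + 1))).  Summing over the bits
   of the d_j neighbours of j produces cos(2 gamma lambda)^d_j, and summing over
   z_j produces sin(2 gamma (1 - d_j lambda)). *)

Section ComplexExponential.
Context {R : realType}.
Local Notation C := R[i].
Local Notation Re := (@complex.Re R).
Local Notation Im := (@complex.Im R).

Lemma complexP (x y : C) : Re x = Re y -> Im x = Im y -> x = y.
Proof. by case: x y => a b [c d] /= -> ->. Qed.

Lemma Re_sum (I : Type) (r : seq I) (F : I -> C) :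
  Re (\sum_(i <- r) F i) = \sum_(i <- r) Re (F i).
Proof. exact: (@raddf_sum _ _ (@complex.Re R : Rcomplex R -> R)). Qed.

Lemma Im_sum (I : Type) (r : seq I) (F : I -> C) :
  Im (\sum_(i <- r) F i) = \sum_(i <- r) Im (F i).
Proof. exact: (@raddf_sum _ _ (@complex.Im R : Rcomplex R -> R)). Qed.

Lemma ReM (x y : C) : Re (x * y) = Re x * Re y - Im x * Im y.
Proof. by case: x y => a b [c d]. Qed.

Lemma ImM (x y : C) : Im (x * y) = Re x * Im y + Im x * Re y.
Proof. by case: x y => a b [c d] /=; rewrite addrC. Qed.

Definition expi (t : R) : C := cos t +i* sin t.

Lemma expiE t : expi t = (cos t)%:C + 'i * (sin t)%:C.
Proof. by apply: complexP; rewrite /expi /=; ring. Qed.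

Lemma expi0 : expi 0 = 1.
Proof. by rewrite /expi cos0 sin0. Qed.

Lemma expiD s t : expi (s + t) = expi s * expi t.
Proof. by apply: complexP; rewrite /expi /= ?cosD ?sinD; ring. Qed.

Lemma expi_sum (I : Type) (r : seq I) (P : pred I) (f : I -> R) :
  expi (\sum_(i <- r | P i) f i) = \prod_(i <- r | P i) expi (f i).
Proof. exact: (big_morph _ expiD expi0). Qed.

Lemma expiMn t d : expi t ^+ d = expi (d%:R * t).
Proof.
elim: d => [|d IH]; first by rewrite mul0r expi0.
by rewrite exprS IH -expiD mulrSr mulrDl mul1r addrC.
Qed.

Lemma expiN_sub t : expi (- t) - expi t = - ('i * (2 * sin t)%:C).
Proof. by apply: complexP; rewrite /expi /= ?cosN ?sinN; ring. Qed.

Lemma expi_double_add1 t : expi (t + t) + 1 = 2 * expi t * (cos t)%:C.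
Proof.
have h := cos2Dsin2 t.
by apply: complexP; rewrite /expi /= ?cosD ?sinD; nra.
Qed.

Definition expi_series (t : R) (N : nat) : C :=
  \sum_(k < N) ('i * t%:C) ^+ k / k`!%:R.

Lemma iX k : 'i ^+ k = ((-1) ^+ k./2 : R)%:C * (if odd k then 'i else 1) :> C.
Proof.
rewrite -{1}(odd_double_half k) exprD -muln2 mulnC exprM sqr_i rmorphXn rmorphN1.
by case: (odd k); rewrite ?expr1 ?expr0 mulrC.
Qed.

Lemma Re_iX k : Re ('i ^+ k) = (~~ odd k)%:R * (-1) ^+ k./2.
Proof. by rewrite iX; case: (odd k) => /=; ring. Qed.

Lemma Im_iX k : Im ('i ^+ k) = (odd k)%:R * (-1) ^+ k.-1./2.
Proof.
rewrite iX; case: (boolP (odd k)) => /= [k_odd|_]; last by ring.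
suff -> : k.-1./2 = k./2 by ring.
by rewrite -{1}(odd_double_half k) k_odd /= doubleK.
Qed.

Lemma ReMr (x : C) r : Re (x * r%:C) = Re x * r.
Proof. by case: x => a b /=; ring. Qed.

Lemma ImMr (x : C) r : Im (x * r%:C) = Im x * r.
Proof. by case: x => a b /=; ring. Qed.

Lemma expi_series_term t k :
  ('i * t%:C) ^+ k / k`!%:R = 'i ^+ k * (t ^+ k / k`!%:R)%:C :> C.
Proof. by rewrite exprMn -mulrA rmorphM /= fmorphV rmorphXn /= rmorph_nat. Qed.

Lemma Re_expi_series t N : Re (expi_series t N) = series (cos_coeff t) N.
Proof.
rewrite /expi_series /series /= Re_sum big_mkord; apply: eq_bigr => k _.
by rewrite expi_series_term ReMr Re_iX /cos_coeff /= !mulrA.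
Qed.

Lemma Im_expi_series t N : Im (expi_series t N) = series (sin_coeff t) N.
Proof.
rewrite /expi_series /series /= Im_sum big_mkord; apply: eq_bigr => k _.
by rewrite expi_series_term ImMr Im_iX /sin_coeff /= !mulrA.
Qed.

Definition cvgC (u : nat -> C) (l : C) : Prop :=
  (fun N => Re (u N) : R^o) @ \oo --> Re l /\
  (fun N => Im (u N) : R^o) @ \oo --> Im l.

Lemma cvgC_lim u l : cvgC u l ->
  limn (fun N => Re (u N) : R^o) +i* limn (fun N => Im (u N) : R^o) = l.
Proof. by case=> /norm_cvg_lim -> /norm_cvg_lim ->; case: l. Qed.

Lemma cvgC_expi t : cvgC (expi_series t) (expi t).
Proof.
split; rewrite /expi /=.
- under eq_fun do rewrite Re_expi_series.
  by rewrite cos.unlock; exact: is_cvg_series_cos_coeff.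
- under eq_fun do rewrite Im_expi_series.
  by rewrite sin.unlock; exact: is_cvg_series_sin_coeff.
Qed.

Lemma cvgC_sum (I : Type) (r : seq I) (u : I -> nat -> C) (l : I -> C) :
  (forall i, cvgC (u i) (l i)) ->
  cvgC (fun N => \sum_(i <- r) u i N) (\sum_(i <- r) l i).
Proof.
move=> ul; split; rewrite ?Re_sum ?Im_sum.
- under eq_fun do rewrite Re_sum.
  by apply: cvg_big => [|i _]; [exact: add_continuous | exact: (ul i).1].
- under eq_fun do rewrite Im_sum.
  by apply: cvg_big => [|i _]; [exact: add_continuous | exact: (ul i).2].
Qed.

Lemma cvgC_mull c u l : cvgC u l -> cvgC (fun N => c * u N) (c * l).
Proof.
case=> ure uim; split.
- under eq_fun do rewrite ReM.
  by rewrite ReM; apply: cvgB; apply: cvgMl_tmp.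
- under eq_fun do rewrite ImM.
  by rewrite ImM; apply: cvgD; apply: cvgMl_tmp.
Qed.

End ComplexExponential.

Section Diagonalizable.
Context {R : realType} {n : nat} {U V : op R n}.
Hypothesis UV : forall z w, \sum_y U z y * V y w = op_id n z w.
Hypothesis VU : forall z w, \sum_y V z y * U y w = op_id n z w.

Lemma op_pow_diagonalizable (A : op R n) (d : Defs.basis n -> R[i]) :
  (forall z w, A z w = \sum_y U z y * d y * V y w) ->
  forall k z w, op_pow A k z w = \sum_y U z y * d y ^+ k * V y w.
Proof.
move=> AE; elim=> [|k IH] z w.
  by rewrite /= -UV; apply: eq_bigr => y _; rewrite expr0 mulr1.
rewrite [LHS]/= /op_mul; under eq_bigr do rewrite IH AE big_distrl /=.
rewrite exchange_big /=; apply: eq_bigr => x _.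
under eq_bigr do rewrite big_distrr /=.
rewrite exchange_big /= (bigD1 x) //= [X in _ + X]big1 => [|y yx].
  rewrite addr0; transitivity (U z x * d x * (\sum_y V x y * U y x) * (d x ^+ k * V x w)).
    by rewrite big_distrr big_distrl; apply: eq_bigr => y _ /=; ring.
  by rewrite VU /op_id eqxx exprS; ring.
transitivity (U z x * d x * (\sum_x' V x x' * U x' y) * (d y ^+ k * V y w)).
  by rewrite big_distrr big_distrl; apply: eq_bigr => x' _ /=; ring.
by rewrite VU /op_id eq_sym (negbTE yx) mulr0 mul0r.
Qed.

Lemma expop_diagonalizable (A : op R n) (a : Defs.basis n -> R) :
  (forall z w, A z w = \sum_y U z y * ('i * (a y)%:C) * V y w) ->
  forall z w, expop A z w = \sum_y U z y * expi (a y) * V y w.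
Proof.
move=> AE z w; rewrite /expop /=; apply: cvgC_lim.
have -> : (fun N => \sum_(k < N) op_pow A k z w / k`!%:R) =
    (fun N => \sum_y U z y * V y w * expi_series (a y) N).
  apply/funext => N; under eq_bigr do rewrite (op_pow_diagonalizable _ _ AE) big_distrl /=.
  rewrite exchange_big /=; apply: eq_bigr => y _; rewrite /expi_series big_distrr /=.
  by apply: eq_bigr => k _; rewrite exprMn; ring.
rewrite (eq_bigr (fun y => U z y * V y w * expi (a y))) => [|y _]; last by ring.
by apply: cvgC_sum => y; apply: cvgC_mull; exact: cvgC_expi.
Qed.

End Diagonalizable.

Lemma sum_op_id_diag (R : realType) n (f : Defs.basis n -> R[i]) z w :
  \sum_y op_id n z y * f y * op_id n y w = if z == w then f z else 0.
Proof.
rewrite (bigD1 z) //= big1 => [|y yz]; last by rewrite /op_id eq_sym (negbTE yz) !mul0r.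
by rewrite /op_id eqxx mul1r addr0; case: (z == w); rewrite ?mulr1 ?mulr0.
Qed.

Lemma expop_diagonal (R : realType) n (A : op R n) (a : Defs.basis n -> R) :
  (forall z w, A z w = if z == w then 'i * (a z)%:C else 0) ->
  forall z w, expop A z w = if z == w then expi (a z) else 0.
Proof.
have idK z w : \sum_y op_id n z y * op_id n y w = op_id n z w :> R[i].
  transitivity (\sum_y op_id n z y * (fun=> 1 : R[i]) y * op_id n y w).
    by apply: eq_bigr => y _; rewrite mulr1.
  by rewrite sum_op_id_diag.
move=> AE z w; rewrite (expop_diagonalizable idK idK _ a) ?sum_op_id_diag // => z' w'.
by rewrite sum_op_id_diag AE.
Qed.

Section Bits.
Context {n : nat}.

Lemma eq_basisE (z w : Defs.basis n) : (z == w) = [forall k, z k == w k].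
Proof. by apply/eqP/forallP => [-> //|zw]; apply/ffunP => k; exact/eqP. Qed.

Lemma sum_basis_prod (S : comPzSemiRingType) (F : 'I_n -> bool -> S) :
  \sum_(y : Defs.basis n) \prod_k F k (y k) = \prod_k \sum_b F k b.
Proof. by rewrite bigA_distr_bigA. Qed.

Lemma prod_indicator (S : comPzSemiRingType) (P b : pred 'I_n) :
  \prod_(k | P k) (if b k then 1 else 0 : S) =
  if [forall k, P k ==> b k] then 1 else 0.
Proof.
case: (boolP [forall k, P k ==> b k]) => [/forallP Pb | /forallPn [k]].
  by rewrite big1 // => k /(implyP (Pb k)) ->.
by rewrite negb_imply => /andP [Pk /negbTE bk]; rewrite (bigD1 k) //= bk mul0r.
Qed.

Lemma op_id_prod (R : realType) (z w : Defs.basis n) :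
  op_id n z w = \prod_k (if z k == w k then 1 else 0) :> R[i].
Proof. by rewrite prod_indicator /op_id eq_basisE. Qed.

Lemma prod_if_eq (S : comPzSemiRingType) (j : 'I_n) (q r : 'I_n -> S) :
  \prod_k (if k == j then q k else r k) = q j * \prod_(k | k != j) r k.
Proof. by rewrite (bigD1 j) //= eqxx; congr (_ * _); apply: eq_bigr => k /negbTE ->. Qed.

Lemma sum_prod_pivot (S : comPzSemiRingType) (j : 'I_n) (F : bool -> 'I_n -> bool -> S) :
  \sum_(w : Defs.basis n) \prod_k F (w j) k (w k) =
  \sum_b F b j b * \prod_(k | k != j) \sum_c F b k c.
Proof.
pose G b k c := if k == j then (if c == b then F b k c else 0) else F b k c.
transitivity (\sum_b \sum_(w : Defs.basis n) \prod_k G b k (w k)).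
  rewrite exchange_big; apply: eq_bigr => w _ /=.
  rewrite (bigD1 (w j)) //= [X in _ + X]big1 ?addr0 => [|b bw].
    by apply: eq_bigr => k _; rewrite /G; case: eqP => [->|]; rewrite ?eqxx.
  by rewrite (bigD1 j) //= /G eqxx eq_sym (negbTE bw) mul0r.
apply: eq_bigr => b _.
rewrite sum_basis_prod (bigD1 j) //= /G eqxx -big_mkcond big_pred1_eq.
by congr (_ * _); apply: eq_bigr => k /negbTE kj; apply: eq_bigr => c _; rewrite kj.
Qed.

Lemma flip_at (j : 'I_n) (w : Defs.basis n) : flip j w j = ~~ w j.
Proof. by rewrite /flip ffunE eqxx. Qed.

Lemma flip_neq (j k : 'I_n) (w : Defs.basis n) : k != j -> flip j w k = w k.
Proof. by move=> kj; rewrite /flip ffunE (negbTE kj). Qed.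

Lemma sum_agree_off_flip (S : pzSemiRingType) (j : 'I_n) (w : Defs.basis n)
    (F : Defs.basis n -> S) :
  \sum_(w' : Defs.basis n)
    F w' * (if [forall k, (k != j) ==> (w k == w' k)] then 1 else 0) =
  F w + F (flip j w).
Proof.
transitivity (\sum_(w' : Defs.basis n | [forall k, (k != j) ==> (w k == w' k)]) F w').
  by rewrite [RHS]big_mkcond; apply: eq_bigr => w' _; case: ifP; rewrite ?mulr1 ?mulr0.
have flip_neq_w : flip j w != w.
  by apply/eqP => /ffunP/(_ j); rewrite flip_at; case: (w j).
rewrite (bigD1 w); last by apply/forallP => k; rewrite eqxx implybT.
rewrite (bigD1 (flip j w)) /=; last first.
  by rewrite flip_neq_w andbT; apply/forallP => k; apply/implyP => kj; rewrite flip_neq.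
rewrite big1 ?addr0 // => w' /andP [/andP [/forallP agree w'w] w'f]; exfalso.
have agree_off k : k != j -> w' k = w k.
  by move=> kj; move/implyP: (agree k) => /(_ kj) /eqP.
case: (eqVneq (w' j) (w j)) => [wj|wj].
  apply/(negP w'w)/eqP/ffunP => k.
  by case: (eqVneq k j) => [->|/agree_off].
apply/(negP w'f)/eqP/ffunP => k; case: (eqVneq k j) => [->|kj].
  by rewrite flip_at; move: wj; case: (w' j); case: (w j).
by rewrite flip_neq // agree_off.
Qed.

Lemma sum_spin (R : realType) (j : 'I_n) :
  \sum_(w : Defs.basis n) (spin R (w j))%:C = 0 :> R[i].
Proof.
pose g k b := if k == j then (spin R b)%:C else 1 : R[i].
transitivity (\sum_(w : Defs.basis n) \prod_k g k (w k)).
  by apply: eq_bigr => w _; rewrite -big_mkcond big_pred1_eq.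
rewrite sum_basis_prod (bigD1 j) //= /g eqxx big_bool /spin /=.
by rewrite rmorph1 rmorphN1 addrN mul0r.
Qed.

End Bits.

Section Mixer.
Context {R : realType} {n : nat}.
Local Notation C := R[i].

(* sqrt 2 times the Hadamard matrix, in the basis order (true, false) *)
Definition hadamard (a b : bool) : C := if ~~ a && ~~ b then -1 else 1.

Definition mixer (beta : R) (a c : bool) : C :=
  if a == c then (cos beta)%:C else 'i * (sin beta)%:C.

Lemma hadamardK a c : \sum_b hadamard a b / 2 * hadamard b c = if a == c then 1 else 0.
Proof. by case: a; case: c; rewrite big_bool /hadamard /=; field. Qed.

Lemma hadamard_spin a c :
  \sum_b hadamard a b / 2 * (spin R b)%:C * hadamard b c = if a != c then 1 else 0.
Proof.
by case: a; case: c; rewrite big_bool /hadamard /spin /= ?rmorphN rmorph1; field.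
Qed.

Lemma hadamard_expi beta a c :
  \sum_b hadamard a b / 2 * expi (beta * spin R b) * hadamard b c = mixer beta a c.
Proof.
have cN : (cos (- beta))%:C = (cos beta)%:C :> C by rewrite cosN.
have sN : (sin (- beta))%:C = - (sin beta)%:C :> C by rewrite sinN rmorphN.
by case: a; case: c;
  rewrite big_bool /hadamard /spin /mixer /= ?mulr1 ?mulrN1 !expiE ?cN ?sN; field.
Qed.

Definition hadamard_tensor : op R n := fun y w => \prod_k hadamard (y k) (w k).
Definition hadamard_tensor_inv : op R n := fun z y => \prod_k (hadamard (z k) (y k) / 2).

Lemma sum_hadamard_conj (g : 'I_n -> bool -> C) z w :
  \sum_y hadamard_tensor_inv z y * \prod_k g k (y k) * hadamard_tensor y w =
  \prod_k \sum_b hadamard (z k) b / 2 * g k b * hadamard b (w k).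
Proof. by rewrite -sum_basis_prod; apply: eq_bigr => y _; rewrite -!big_split. Qed.

Lemma hadamard_tensorK z w :
  \sum_y hadamard_tensor_inv z y * hadamard_tensor y w = op_id n z w.
Proof.
rewrite op_id_prod; under [RHS]eq_bigr do rewrite -hadamardK.
by rewrite -sum_basis_prod; apply: eq_bigr => y _; rewrite -big_split.
Qed.

Lemma hadamard_tensorVK z w :
  \sum_y hadamard_tensor z y * hadamard_tensor_inv y w = op_id n z w.
Proof.
rewrite op_id_prod; under [RHS]eq_bigr do rewrite -hadamardK.
rewrite -sum_basis_prod; apply: eq_bigr => y _; rewrite -big_split.
by apply: eq_bigr => k _ /=; rewrite mulrA mulrAC.
Qed.

Lemma sigma_x_prod (i : 'I_n) z w : sigma_x i z w =
  \prod_k (if (if k == i then z k != w k else z k == w k) then 1 else 0 : C).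
Proof.
rewrite /sigma_x.
have -> : (z == flip i w) = [forall k, if k == i then z k != w k else z k == w k].
  rewrite eq_basisE; apply: eq_forallb => k; rewrite /flip ffunE.
  by case: (k == i); case: (z k); case: (w k).
by rewrite prod_indicator.
Qed.

Lemma sigma_x_hadamard (i : 'I_n) z w :
  sigma_x i z w = \sum_y hadamard_tensor_inv z y * (spin R (y i))%:C * hadamard_tensor y w.
Proof.
pose g k b := if k == i then (spin R b)%:C else 1.
transitivity (\sum_y hadamard_tensor_inv z y * \prod_k g k (y k) * hadamard_tensor y w);
  last by apply: eq_bigr => y _; rewrite -big_mkcond big_pred1_eq.
rewrite sum_hadamard_conj sigma_x_prod; apply: eq_bigr => k _; rewrite /g.
case: (k == i); first by rewrite hadamard_spin.
by under [RHS]eq_bigr do rewrite mulr1; rewrite hadamardK.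
Qed.

Lemma B_hat_hadamard beta z w :
  op_scale (- ('i * beta%:C)) (B_hat n) z w =
  \sum_y hadamard_tensor_inv z y * ('i * (beta * \sum_i spin R (y i))%:C) *
         hadamard_tensor y w.
Proof.
rewrite /B_hat /op_scale /op_sum mulN1r mulrNN.
under eq_bigr do rewrite sigma_x_hadamard.
rewrite exchange_big mulr_sumr; apply: eq_bigr => y _ /=.
by rewrite rmorphM rmorph_sum -big_distrl -big_distrr /=; ring.
Qed.

Lemma expop_B_hat beta z w :
  expop (op_scale (- ('i * beta%:C)) (B_hat n)) z w = \prod_k mixer beta (z k) (w k).
Proof.
rewrite (expop_diagonalizable hadamard_tensorK hadamard_tensorVK _ _ (B_hat_hadamard beta)).
under [RHS]eq_bigr do rewrite -hadamard_expi.
by rewrite -sum_hadamard_conj; apply: eq_bigr => y _; rewrite mulr_sumr expi_sum.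
Qed.

Lemma mixer_unitary beta a a' :
  \sum_b (mixer beta b a)^* * mixer beta b a' = if a == a' then 1 else 0.
Proof.
have h := cos2Dsin2 beta.
by case: a; case: a'; rewrite big_bool /mixer /=; apply: complexP => /=; nra.
Qed.

Lemma mixer_sigma_z beta a a' :
  \sum_b (spin R b)%:C * (mixer beta b a)^* * mixer beta b a' =
  (spin R a)%:C * mixer (2 * beta) a a'.
Proof.
rewrite (_ : 2 * beta = beta + beta); last by ring.
by case: a; case: a'; rewrite big_bool /mixer /spin /= ?cosD ?sinD;
  apply: complexP => /=; ring.
Qed.

Lemma mixer_diag beta a : mixer beta a a = (cos beta)%:C.
Proof. by rewrite /mixer eqxx. Qed.

Lemma mixer_flip beta a : mixer beta a (~~ a) = 'i * (sin beta)%:C.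
Proof. by rewrite /mixer; case: a. Qed.

Lemma mixer_heisenberg beta (j : 'I_n) (w w' : Defs.basis n) :
  \sum_(z : Defs.basis n) (spin R (z j))%:C * (\prod_k mixer beta (z k) (w k))^* *
          \prod_k mixer beta (z k) (w' k) =
  (spin R (w j))%:C * mixer (2 * beta) (w j) (w' j) *
  (if [forall k, (k != j) ==> (w k == w' k)] then 1 else 0).
Proof.
pose F k b := (if k == j then (spin R b)%:C else 1) *
  (mixer beta b (w k))^* * mixer beta b (w' k).
transitivity (\sum_(z : Defs.basis n) \prod_k F k (z k)).
  by apply: eq_bigr => z _; rewrite !big_split /= -big_mkcond big_pred1_eq rmorph_prod.
rewrite sum_basis_prod (bigD1 j) //= /F eqxx mixer_sigma_z; congr (_ * _).
rewrite -prod_indicator; apply: eq_bigr => k /negbTE ->.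
by under eq_bigr do rewrite mul1r; exact: mixer_unitary.
Qed.

End Mixer.

Lemma expect_sigma_z_apply {R : realType} {n : nat} {M : op R n} {v p : state R n}
    (j : 'I_n) :
  (forall z, v z = \sum_w M z w * p w) ->
  expect v (sigma_z j) =
  \sum_w \sum_w' (p w)^* * p w' *
    \sum_(z : Defs.basis n) (spin R (z j))%:C * (M z w)^* * M z w'.
Proof.
move=> vE; transitivity (\sum_z (v z)^* * (spin R (z j))%:C * v z).
  rewrite /expect; apply: eq_bigr => z _; rewrite (bigD1 z) //= big1 ?addr0 => [|w wz].
    by rewrite /sigma_z eqxx.
  by rewrite /sigma_z eq_sym (negbTE wz) mulr0 mul0r.
under eq_bigr do rewrite !vE rmorph_sum !mulr_suml.
under eq_bigr do under eq_bigr do rewrite mulr_sumr.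
rewrite exchange_big /=; apply: eq_bigr => w _.
rewrite exchange_big /=; apply: eq_bigr => w' _.
rewrite mulr_sumr; apply: eq_bigr => z _.
by rewrite rmorphM /=; ring.
Qed.

Section Cost.
Context {R : realType} {n : nat} (adj : rel 'I_n) (lambda : R).
Hypothesis adj_sym : forall i j, adj i j = adj j i.
Hypothesis adj_irrefl : forall i, ~~ adj i i.
Local Notation C := R[i].

Definition shifted_spin (w : Defs.basis n) (i : 'I_n) : R := spin R (w i) + 1.

Definition cost (w : Defs.basis n) : R :=
  - \sum_i shifted_spin w i + lambda *
    \sum_(p : 'I_n * 'I_n | (p.1 < p.2)%N && adj p.1 p.2)
      shifted_spin w p.1 * shifted_spin w p.2.

Lemma sigma_z_addI (i : 'I_n) z w :
  op_add (sigma_z i) (op_id n) z w = if z == w then (shifted_spin z i)%:C else 0 :> C.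
Proof.
rewrite /op_add /sigma_z /op_id /shifted_spin.
by case: (z == w); rewrite ?rmorphD ?addr0.
Qed.

Lemma C_hat_diag z w : C_hat adj lambda z w = if z == w then (cost z)%:C else 0.
Proof.
rewrite /C_hat /op_add /op_scale /op_sum /op_mul.
under eq_bigr do rewrite -/(op_add _ _ z w) sigma_z_addI.
under [X in _ + _ * X]eq_bigr do
  under eq_bigr do rewrite -!/(op_add _ _ _ _) !sigma_z_addI.
have diag_mul (f g : Defs.basis n -> R) :
    \sum_y (if z == y then (f z)%:C else 0) * (if y == w then (g y)%:C else 0) =
    if z == w then (f z * g z)%:C else 0 :> C.
  rewrite (bigD1 z) //= eqxx big1 ?addr0 => [|y]; last first.
    by rewrite eq_sym => /negbTE ->; rewrite mul0r.
  by case: eqP => [->|_]; rewrite ?rmorphM ?mulr0.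
under [X in _ + _ * X]eq_bigr => p _ do
  rewrite (diag_mul (shifted_spin^~ p.1) (shifted_spin^~ p.2)).
case: (z == w); last by rewrite !big1 ?mulr0 ?addr0.
by rewrite /cost rmorphD rmorphN rmorphM !rmorph_sum /= mulN1r.
Qed.

Lemma expop_C_hat gamma z w :
  expop (op_scale (- ('i * gamma%:C)) (C_hat adj lambda)) z w =
  if z == w then expi (- (gamma * cost z)) else 0.
Proof.
apply: (@expop_diagonal R n _ (fun z => - (gamma * cost z))) => {}z {}w.
rewrite /op_scale C_hat_diag.
by case: (z == w); rewrite ?mulr0 // rmorphN rmorphM /=; ring.
Qed.

Lemma sum_edges_update (f g : 'I_n -> R) (j : 'I_n) :
  (forall k, k != j -> f k = g k) ->
  \sum_(p : 'I_n * 'I_n | (p.1 < p.2)%N && adj p.1 p.2) f p.1 * f p.2 -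
  \sum_(p : 'I_n * 'I_n | (p.1 < p.2)%N && adj p.1 p.2) g p.1 * g p.2 =
  (f j - g j) * \sum_(k | adj j k) f k.
Proof.
move=> fg; rewrite -sumrB.
transitivity (\sum_(a : 'I_n) \sum_(b : 'I_n)
    (if (a < b)%N && adj a b then f a * f b - g a * g b else 0)).
  by rewrite pair_big big_mkcond; apply: eq_big => // [[a b]].
rewrite (bigD1 j) //=.
have -> : \sum_(a | a != j) \sum_(b : 'I_n)
      (if (a < b)%N && adj a b then f a * f b - g a * g b else 0) =
    \sum_(a | a != j) (if (a < j)%N && adj a j then f a * (f j - g j) else 0).
  apply: eq_bigr => a aj; rewrite (bigD1 j) //= big1 ?addr0 => [|b bj].
    by case: ifP => // _; rewrite (fg a aj); ring.
  by case: ifP => // _; rewrite fg // fg // subrr.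
rewrite (bigD1 j) //= ltnn /= add0r.
rewrite [in RHS]big_mkcond [RHS]mulr_sumr [in RHS](bigD1 j) //=.
rewrite (negbTE (adj_irrefl j)) mulr0 add0r -big_split /=.
apply: eq_bigr => b bj; rewrite (adj_sym b j).
case: (adj j b); last by rewrite !andbF addr0 mulr0.
rewrite !andbT; case: ltngtP => [jb|bj'|jb].
- by rewrite addr0 -(fg b bj); ring.
- by rewrite add0r; ring.
- by move: bj; rewrite (_ : b = j) ?eqxx //; apply/val_inj.
Qed.

Lemma cost_flip (j : 'I_n) w :
  cost w - cost (flip j w) =
  - (2 * spin R (w j)) * (1 - lambda * \sum_(k | adj j k) shifted_spin w k).
Proof.
have flip_off k : k != j -> shifted_spin w k = shifted_spin (flip j w) k.
  by move=> kj; rewrite /shifted_spin flip_neq.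
have flip_on : shifted_spin w j - shifted_spin (flip j w) j = 2 * spin R (w j).
  by rewrite /shifted_spin flip_at; case: (w j); rewrite /spin /=; ring.
have vertices :
    \sum_i shifted_spin w i - \sum_i shifted_spin (flip j w) i = 2 * spin R (w j).
  rewrite -sumrB (bigD1 j) //= big1 ?addr0 // => k kj.
  by rewrite flip_off // subrr.
transitivity (- (\sum_i shifted_spin w i - \sum_i shifted_spin (flip j w) i) +
  lambda * (\sum_(p : 'I_n * 'I_n | (p.1 < p.2)%N && adj p.1 p.2)
              shifted_spin w p.1 * shifted_spin w p.2 -
            \sum_(p : 'I_n * 'I_n | (p.1 < p.2)%N && adj p.1 p.2)
              shifted_spin (flip j w) p.1 * shifted_spin (flip j w) p.2)).
  by rewrite /cost; ring.
by rewrite vertices (sum_edges_update _ _ _ flip_off) flip_on; ring.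
Qed.

End Cost.

Section QAOA.
Context {R : realType} {n : nat} (adj : rel 'I_n) (lambda : R).
Hypothesis adj_sym : forall i j, adj i j = adj j i.
Hypothesis adj_irrefl : forall i, ~~ adj i i.
Local Notation C := R[i].
Local Notation cost := (cost adj lambda).

Definition phase_state (gamma : R) : state R n :=
  fun w => expi (- (gamma * cost w)) * phi0 n w.

Lemma psiE beta gamma z :
  psi adj lambda beta gamma z =
  \sum_(w : Defs.basis n) (\prod_k mixer beta (z k) (w k)) * phase_state gamma w.
Proof.
rewrite /psi /apply; apply: eq_bigr => w _; rewrite expop_B_hat; congr (_ * _).
rewrite (bigD1 w) //= expop_C_hat eqxx big1 ?addr0 // => w' w'w.
by rewrite expop_C_hat eq_sym (negbTE w'w) mul0r.
Qed.

(* [Num.conj] is what the notation [x^*] denotes in [x^* * y], e.g. in [expect]. *)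
Lemma conj_phase_state gamma w :
  Num.conj (phase_state gamma w) = expi (gamma * cost w) * phi0 n w.
Proof. by apply: complexP; rewrite /phase_state /phi0 /expi /= ?cosN ?sinN; ring. Qed.

Lemma phase_state_conj_mul gamma w w' :
  (phase_state gamma w)^* * phase_state gamma w' =
  (2^-1) ^+ n * expi (gamma * (cost w - cost w')).
Proof.
rewrite conj_phase_state /phase_state mulrACA -expiD -expr2.
rewrite -rmorphXn /= !exprVn sqr_sqrtr ?exprn_ge0 ?ler0n // fmorphV rmorphXn rmorph_nat.
by rewrite mulrC; congr (_ * expi _); ring.
Qed.

Lemma prod_neighbours (B : C) (j : 'I_n) :
  \prod_(k | k != j) (if adj j k then B else 1) = B ^+ degree adj j.
Proof.
rewrite -big_mkcondr /degree -prodr_const; apply: eq_bigl => k.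
by rewrite inE; case: (eqVneq k j) => [->|]; rewrite ?(negbTE (adj_irrefl j)).
Qed.

Lemma expect_psi beta gamma j :
  expect (psi adj lambda beta gamma) (sigma_z j) =
  (2^-1) ^+ n * \sum_(w : Defs.basis n) ((spin R (w j))%:C * (cos (2 * beta))%:C +
    'i * (sin (2 * beta))%:C * ((spin R (w j))%:C *
      expi (- (2 * gamma * spin R (w j)) *
            (1 - lambda * \sum_(k | adj j k) shifted_spin w k)))).
Proof.
rewrite (expect_sigma_z_apply _ (psiE beta gamma)) mulr_sumr; apply: eq_bigr => w _.
under eq_bigr do rewrite mixer_heisenberg mulrA.
rewrite sum_agree_off_flip !phase_state_conj_mul subrr mulr0 expi0.
rewrite flip_at mixer_diag mixer_flip cost_flip //.
set X := 1 - lambda * _.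
have -> : gamma * (- (2 * spin R (w j)) * X) = - (2 * gamma * spin R (w j)) * X by ring.
ring.
Qed.

Lemma sum_spin_phase gamma (j : 'I_n) :
  (2^-1) ^+ n * \sum_(w : Defs.basis n) (spin R (w j))%:C *
    expi (- (2 * gamma * spin R (w j)) *
          (1 - lambda * \sum_(k | adj j k) shifted_spin w k)) =
  - ('i * (cos (2 * gamma * lambda) ^+ degree adj j *
           sin (2 * gamma * (1 - (degree adj j)%:R * lambda)))%:C).
Proof.
set d := degree adj j; set t := 2 * gamma * lambda.
set u := 2 * gamma * (1 - d%:R * lambda).
pose F b k c : C := (if k == j then (spin R b)%:C * expi (- (2 * gamma * spin R b))
  else if adj j k then expi (t * spin R b * (spin R c + 1)) else 1) / 2.
transitivity (\sum_(w : Defs.basis n) \prod_k F (w j) k (w k)).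
  rewrite mulr_sumr; apply: eq_bigr => w _.
  rewrite [RHS]big_split [RHS]/= prodr_const card_ord [RHS]mulrC; congr (_ * _).
  rewrite prod_if_eq -big_mkcondr -expi_sum -[RHS]mulrA -expiD; congr (_ * expi _).
  rewrite [in RHS](eq_bigl (adj j)) => [|k]; last first.
    by case: (eqVneq k j) => [->|]; rewrite ?(negbTE (adj_irrefl j)).
  by rewrite -mulr_sumr /shifted_spin /t; ring.
have neighbour b k : k != j ->
    \sum_c F b k c = if adj j k then expi (t * spin R b) * (cos t)%:C else 1.
  move=> kj; rewrite big_bool /F (negbTE kj) /=; case: (adj j k); last by field.
  have cos_t : cos (t * spin R b) = cos t by case: b; rewrite /spin ?mulr1 ?mulrN1 ?cosN.
  rewrite addNr mulr0 expi0 -mulrDl -cos_t.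
  rewrite (_ : t * spin R b * (1 + 1) = t * spin R b + t * spin R b); last by ring.
  by rewrite expi_double_add1; field.
have term b : F b j b * (expi (t * spin R b) * (cos t)%:C) ^+ d =
    (spin R b)%:C / 2 * (cos t)%:C ^+ d * expi (- (spin R b * u)).
  rewrite /F eqxx exprMn expiMn.
  transitivity ((spin R b)%:C / 2 * (cos t)%:C ^+ d *
    (expi (- (2 * gamma * spin R b)) * expi (d%:R * (t * spin R b)))); first by ring.
  by rewrite -expiD /u /t; congr (_ * expi _); ring.
rewrite sum_prod_pivot.
under eq_bigr do rewrite (eq_bigr _ (neighbour _)) prod_neighbours term.
rewrite big_bool /spin /= rmorph1 rmorphN1 !mul1r !mulN1r opprK.
transitivity (2^-1 * (cos t)%:C ^+ d * (expi (- u) - expi u)); first by ring.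
by rewrite expiN_sub !rmorphM rmorphXn rmorph_nat; field.
Qed.

End QAOA.

Theorem mainTheorem1 (R : realType) (n : nat) (adj : rel 'I_n)
    (Hg : simple_graph adj) (lambda beta gamma : R) (j : 'I_n) :
  expect (psi adj lambda beta gamma) (sigma_z j) =
  (sin (2 * beta) * (cos (2 * gamma * lambda)) ^+ degree adj j
     * sin (2 * gamma * (1 - (degree adj j)%:R * lambda)))%:C.
Proof.
case: Hg => adj_sym adj_irrefl.
rewrite expect_psi // big_split /= mulrDr -mulr_suml sum_spin mul0r mulr0 add0r.
rewrite -mulr_sumr mulrCA sum_spin_phase //.
by apply: complexP => /=; ring.
Qed.
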